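(* Let $q=3$, with $G_3$-orbits of lines $\mathcal L_1,\dots,\mathcal L_7$ and of points $\mathcal M_1,\dots,\mathcal M_4$ as in the context. For each pair $(\mathcal L_i,\mathcal M_j)$ every line of $\mathcal L_i$ contains exactly $t_{ij}$ points of $\mathcal M_j$ and every point of $\mathcal M_j$ lies on exactly $b_{ij}$ lines of $\mathcal L_i$, where, listing $(t_{ij},b_{ij})$ for $j=4,1,3,2$ in this order: $\mathcal L_1$: $(2,1),(2,3),(0,0),(0,0)$; $\mathcal L_2$: $(2,2),(0,0),(2,3),(0,0)$; $\mathcal L_3$: $(0,0),(1,4),(2,4),(1,1)$; $\mathcal L_4$: $(0,0),(0,0),(0,0),(4,2)$; $\mathcal L_5$: $(1,2),(1,6),(0,0),(2,3)$; $\mathcal L_6$: $(1,4),(0,0),(1,6),(2,6)$; $\mathcal L_7$: $(3,4),(0,0),(0,0),(1,1)$.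
   Context: Notation. $\mathbb F_q$ is the field with $q$ elements, $\mathbb F_q^+=\mathbb F_q\cup\{\infty\}$. Points of $\mathrm{PG}(3,q)$ are written $\mathbf P(x_0,x_1,x_2,x_3)$ with $x$ a nonzero row vector up to scalars; $\boldsymbol\pi(c_0,c_1,c_2,c_3)$ is the plane $c_0x_0+c_1x_1+c_2x_2+c_3x_3=0$. Put $P(t)=\mathbf P(t^3,t^2,t,1)$ for $t\in\mathbb F_q$, $P(\infty)=\mathbf P(1,0,0,0)$, and $\mathscr C=\{P(t):t\in\mathbb F_q^+\}$ (the twisted cubic). The osculating planes are $\pi_{\rm osc}(t)=\boldsymbol\pi(1,-3t,3t^2,-t^3)$ ($t\in\mathbb F_q$) and $\pi_{\rm osc}(\infty)=\boldsymbol\pi(0,0,0,1)$; these $q+1$ planes are called $\Gamma$-planes. The tangent at $P(t)$, $t\in\mathbb F_q$, is the line through $P(t)$ and $\mathbf P(3t^2,2t,1,0)$; the tangent at $P(\infty)$ is the line through $\mathbf P(1,0,0,0)$ and $\mathbf P(0,1,0,0)$. A real chord is a line through two distinct points of $\mathscr C$. For $\alpha\in\mathbb F_{q^2}\setminus\mathbb F_q$, the line of $\mathrm{PG}(3,q^2)$ through $P(\alpha),P(\alpha^q)$ is defined over $\mathbb F_q$, and the corresponding line of $\mathrm{PG}(3,q)$ is an imaginary chord. A unisecant is a line meeting $\mathscr C$ in exactly one point; an external line is a line disjoint from $\mathscr C$. $G_q$ is the group of all projectivities of $\mathrm{PG}(3,q)$ mapping $\mathscr C$ onto itself. $G_3^*$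 is the subgroup of $G_3$ of projectivities $\mathbf P(x)\mapsto\mathbf P(xM)$ with $M=M(a,b,c,d)$ having rows $(a^3,a^2c,ac^2,c^3)$, $(3a^2b,a^2d+2abc,bc^2+2acd,3c^2d)$, $(3ab^2,b^2c+2abd,ad^2+2bcd,3cd^2)$, $(b^3,b^2d,bd^2,d^3)$, $ad-bc\neq0$. For $q=3$ all four $\Gamma$-planes contain the line $\mathcal A:\ x_0=x_3=0$. Point types for $q=3$: $\mathscr C$-point = point of $\mathscr C$; $4_\Gamma$-point = point of $\mathcal A$; TO-point = point not in $\mathscr C\cup\mathcal A$ lying on a tangent; RC-point = point not in $\mathscr C\cup\mathcal A$, on no tangent, lying on a real chord; IC-point = any point of none of the previous types. Line types for $q=3$: RC = real chord; Tr = tangent; IC = imaginary chord; Ar = the line $\mathcal A$; U$\Gamma$ = unisecant which is not a tangent and is contained in some $\Gamma$-plane; Un$\Gamma$ = unisecant contained in no $\Gamma$-plane; EA = external line different from $\mathcal A$ meeting $\mathcal A$; En$\Gamma$ = external line not meeting $\mathcal A$ which is not an imaginary chord. Sub-types: Un$\Gamma_1$, Un$\Gamma_2$ = $G_3^*$-orbits of $\{x_1=-x_2,x_1=-x_3\}$, $\{x_2=0,x_1=-x_3\}$; EA$_2$, EA$_3$ = $G_3^*$-orbits of $\{x_0=0,x_1=-x_3\}$, $\{x_0=x_2,x_3=0\}$, EA$_1$ = remaining EA-lines; En$\Gamma_3$ = $G_3^*$-orbit of $\{x_0=x_2,x_1=-x_3\}$, and the remaining En$\Gamma$-lines form two $G_3^*$-orbits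 En$\Gamma_2$ (size 12) and En$\Gamma_1$ (size 24). The $G_3$-orbits are: points $\mathcal M_1=\{\mathscr C\text{-points}\}$ (4), $\mathcal M_2=\{4_\Gamma\text{- and IC-points}\}$ (16), $\mathcal M_3=\{\text{TO-points}\}$ (8), $\mathcal M_4=\{\text{RC-points}\}$ (12); lines $\mathcal L_1=\{\text{RC}\}$ (6), $\mathcal L_2=\text{En}\Gamma_2$ (12), $\mathcal L_3=\{\text{Tr}\}\cup\text{Un}\Gamma_2$ (16), $\mathcal L_4=\{\text{IC}\}\cup\{\mathcal A\}\cup\text{EA}_2$ (8), $\mathcal L_5=\{\text{U}\Gamma\}\cup\text{Un}\Gamma_1$ (24), $\mathcal L_6=\text{EA}_1\cup\text{En}\Gamma_1$ (48), $\mathcal L_7=\text{EA}_3\cup\text{En}\Gamma_3$ (16). *)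

(* The projective space PG(3,3) is modelled as the lattice
   of subspaces of F_3^4 (row vectors): a point is a 1-dimensional subspace,
   a line a 2-dimensional subspace, both as finite sets of vectors (0 included);
   incidence is inclusion. *)
From HB Require Import structures.
From mathcomp Require Import all_boot all_order all_algebra.
Set Implicit Arguments. Unset Strict Implicit. Unset Printing Implicit Defensive.
Import Order.TTheory GRing.Theory Num.Theory.
Local Open Scope ring_scope.

Notation F := 'F_3.
Notation vec := 'rV[F]_4.

Definition mkv (a b c d : F) : vec := \row_(i < 4) nth 0 [:: a; b; c; d] i.

Definition span1 (v : vec) : {set vec} := [set a *: v | a : F].
Definition span2 (u v : vec) : {set vec} := [set a *: u + b *: v | a : F, b : F].

Definition is_point (P : {set vec}) : bool :=
  [exists v : vec, (v != 0) && (P == span1 v)].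
Definition is_line (L : {set vec}) : bool :=
  [exists u : vec, exists v : vec, [&& u != 0, v \notin span1 u & L == span2 u v]].

Definition plane (c : vec) : {set vec} := [set x : vec | \sum_(i < 4) c 0 i * x 0 i == 0].

(* parameters t in F_q^+ = F_q u {oo}: None stands for oo *)
Definition Pt (t : option F) : vec :=
  if t is Some t then mkv (t ^+ 3) (t ^+ 2) t 1 else mkv 1 0 0 0.
Definition osc (t : option F) : vec :=
  if t is Some t then mkv 1 (- (3%:R * t)) (3%:R * t ^+ 2) (- t ^+ 3) else mkv 0 0 0 1.
Definition tdir (t : option F) : vec :=
  if t is Some t then mkv (3%:R * t ^+ 2) (2%:R * t) 1 0 else mkv 0 1 0 0.
Definition tangent (t : option F) : {set vec} := span2 (Pt t) (tdir t).

Definition Aline : {set vec} := [set x : vec | (x 0 0 == 0) && (x 0 3 == 0)].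

Definition Cpoint (P : {set vec}) : bool := [exists t, P == span1 (Pt t)].
Definition Gamma4point (P : {set vec}) : bool := P \subset Aline.
Definition on_tangent (P : {set vec}) : bool := [exists t, P \subset tangent t].
Definition on_real_chord (P : {set vec}) : bool :=
  [exists t1, exists t2, (t1 != t2) && (P \subset span2 (Pt t1) (Pt t2))].
Definition TOpoint P := [&& ~~ Cpoint P, ~~ Gamma4point P & on_tangent P].
Definition RCpoint P :=
  [&& ~~ Cpoint P, ~~ Gamma4point P, ~~ on_tangent P & on_real_chord P].
Definition ICpoint P :=
  [&& ~~ Cpoint P, ~~ Gamma4point P, ~~ TOpoint P & ~~ RCpoint P].

(* ---------- imaginary chords ----------
   F_9 is modelled as F_3(i), i^2 = -1, elements a + b i encoded as pairs (a,b). *)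
Definition cmul (x y : F * F) : F * F :=
  (x.1 * y.1 - x.2 * y.2, x.1 * y.2 + x.2 * y.1).
(* P(alpha) = U + i V with U, V in F_3^4; alpha = a + b i *)
Definition ReP (a b : F) : vec :=
  let al := (a, b) in let a2 := cmul al al in let a3 := cmul a2 al in
  mkv a3.1 a2.1 a 1.
Definition ImP (a b : F) : vec :=
  let al := (a, b) in let a2 := cmul al al in let a3 := cmul a2 al in
  mkv a3.2 a2.2 b 0.
(* the F_9-line through P(alpha), P(alpha^3) is spanned by U and V; its
   F_3-points form span2 U V *)
Definition IC_line (L : {set vec}) : bool :=
  [exists a : F, exists b : F, (b != 0) && (L == span2 (ReP a b) (ImP a b))].

Definition RC_line (L : {set vec}) : bool :=
  [exists t1, exists t2, (t1 != t2) && (L == span2 (Pt t1) (Pt t2))].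
Definition Tr_line (L : {set vec}) : bool := [exists t, L == tangent t].
Definition ncurve (L : {set vec}) : nat := #|[set t | span1 (Pt t) \subset L]|.
Definition in_Gamma_plane (L : {set vec}) : bool := [exists t, L \subset plane (osc t)].
Definition meets_A (L : {set vec}) : bool := [exists v : vec, [&& v != 0, v \in L & v \in Aline]].
Definition UGamma L := [&& ncurve L == 1%N, ~~ Tr_line L & in_Gamma_plane L].
Definition UnGamma L := (ncurve L == 1%N) && ~~ in_Gamma_plane L.
Definition EA_line L := [&& ncurve L == 0%N, L != Aline & meets_A L].
Definition EnGamma L := [&& ncurve L == 0%N, ~~ meets_A L & ~~ IC_line L].

Definition Mabcd (a b c d : F) : 'M[F]_4 :=
  \matrix_(i < 4, j < 4) nth 0 (nth [::] [::
    [:: a ^+ 3; a ^+ 2 * c; a * c ^+ 2; c ^+ 3];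
    [:: 3%:R * a ^+ 2 * b; a ^+ 2 * d + 2%:R * a * b * c;
        b * c ^+ 2 + 2%:R * a * c * d; 3%:R * c ^+ 2 * d];
    [:: 3%:R * a * b ^+ 2; b ^+ 2 * c + 2%:R * a * b * d;
        a * d ^+ 2 + 2%:R * b * c * d; 3%:R * c * d ^+ 2];
    [:: b ^+ 3; b ^+ 2 * d; b * d ^+ 2; d ^+ 3]] i) j.
Definition Gstar_image (M : 'M[F]_4) (L : {set vec}) : {set vec} := [set x *m M | x in L].
Definition in_Gstar_orbit (L0 L : {set vec}) : bool :=
  [exists a : F, exists b : F, exists c : F, exists d : F,
     (a * d - b * c != 0) && (L == Gstar_image (Mabcd a b c d) L0)].
Definition Gstar_orbit (L0 : {set vec}) : {set {set vec}} := [set L | in_Gstar_orbit L0 L].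

Definition UnG1_rep : {set vec} := [set x : vec | (x 0 1 == - x 0 2) && (x 0 1 == - x 0 3)].
Definition UnG2_rep : {set vec} := [set x : vec | (x 0 2 == 0) && (x 0 1 == - x 0 3)].
Definition EA2_rep : {set vec} := [set x : vec | (x 0 0 == 0) && (x 0 1 == - x 0 3)].
Definition EA3_rep : {set vec} := [set x : vec | (x 0 0 == x 0 2) && (x 0 3 == 0)].
Definition EnG3_rep : {set vec} := [set x : vec | (x 0 0 == x 0 2) && (x 0 1 == - x 0 3)].

Definition UnGamma1 L := in_Gstar_orbit UnG1_rep L.
Definition UnGamma2 L := in_Gstar_orbit UnG2_rep L.
Definition EA2 L := in_Gstar_orbit EA2_rep L.
Definition EA3 L := in_Gstar_orbit EA3_rep L.
Definition EA1 L := [&& EA_line L, ~~ EA2 L & ~~ EA3 L].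
Definition EnGamma3 L := in_Gstar_orbit EnG3_rep L.
Definition EnGamma_rest L := EnGamma L && ~~ EnGamma3 L.
Definition EnGamma2 L := EnGamma_rest L && (#|Gstar_orbit L| == 12%N).
Definition EnGamma1 L := EnGamma_rest L && (#|Gstar_orbit L| == 24%N).

Definition Mclass (j : nat) (P : {set vec}) : bool :=
  match j with
  | 1 => Cpoint P
  | 2 => Gamma4point P || ICpoint P
  | 3 => TOpoint P
  | 4 => RCpoint P
  | _ => false
  end%N.

Definition Lclass (i : nat) (L : {set vec}) : bool :=
  match i with
  | 1 => RC_line L
  | 2 => EnGamma2 L
  | 3 => Tr_line L || UnGamma2 L
  | 4 => [|| IC_line L, L == Aline | EA2 L]
  | 5 => UGamma L || UnGamma1 L
  | 6 => EA1 L || EnGamma1 L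
  | 7 => EA3 L || EnGamma3 L
  | _ => false
  end%N.

Definition tb (i j : nat) : nat * nat :=
  match i, j with
  | 1, 4 => (2, 1) | 1, 1 => (2, 3) | 1, 3 => (0, 0) | 1, 2 => (0, 0)
  | 2, 4 => (2, 2) | 2, 1 => (0, 0) | 2, 3 => (2, 3) | 2, 2 => (0, 0)
  | 3, 4 => (0, 0) | 3, 1 => (1, 4) | 3, 3 => (2, 4) | 3, 2 => (1, 1)
  | 4, 4 => (0, 0) | 4, 1 => (0, 0) | 4, 3 => (0, 0) | 4, 2 => (4, 2)
  | 5, 4 => (1, 2) | 5, 1 => (1, 6) | 5, 3 => (0, 0) | 5, 2 => (2, 3)
  | 6, 4 => (1, 4) | 6, 1 => (0, 0) | 6, 3 => (1, 6) | 6, 2 => (2, 6)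
  | 7, 4 => (3, 4) | 7, 1 => (0, 0) | 7, 3 => (0, 0) | 7, 2 => (1, 1)
  | _, _ => (0, 0)
  end%N.

(* Over F_3 everything is finite: PG(3,3) has 40 points and 130 lines, and
   each notion entering the statement (points of the twisted cubic, tangents,
   real and imaginary chords, osculating planes, the reference lines and their
   G_3^*-orbits) is spanned by finitely many explicit vectors.  A point or line
   is encoded by the list of coordinate vectors it contains; every defining
   predicate is shown to agree with a computable predicate on such lists (its
   counterpart, named with a prefix [c]), and the incidence table is then
   checked by evaluation over all 40 points and 130 lines. *)

From mathcomp Require Import all_boot all_order all_algebra.
Set Implicit Arguments. Unset Strict Implicit. Unset Printing Implicit Defensive.
Import GRing.Theory.
Local Open Scope ring_scope.

Lemma existsE (T : finType) (s : seq T) (p : pred T) :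
  (forall x, x \in s) -> [exists x, p x] = has p s.
Proof. by move=> sT; apply/existsP/hasP => [[x px]|[x _ px]]; exists x. Qed.

Lemma has_allpairs_pair (T U : Type) (s : seq T) (t : seq U) (p : T -> U -> bool) :
  has (fun xy => p xy.1 xy.2) [seq (x, y) | x <- s, y <- t] = has (fun x => has (p x) t) s.
Proof. by elim: s => //= x s IH; rewrite has_cat has_map IH. Qed.

Lemma exists2E (T : finType) (s : seq T) (p : T -> T -> bool) :
  (forall x, x \in s) ->
  [exists x, exists y, p x y] = has (fun xy => p xy.1 xy.2) [seq (x, y) | x <- s, y <- s].
Proof.
move=> sT; rewrite has_allpairs_pair (existsE _ sT).
by apply: eq_has => x; apply: existsE.
Qed.

Lemma card_set_count (T : finType) (s : seq T) (p : pred T) :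
  uniq s -> (forall x, x \in s) -> #|[set x | p x]| = count p s.
Proof.
move=> s_uniq sT; rewrite -size_filter -(card_uniqP (filter_uniq p s_uniq)).
by apply: eq_card => x; rewrite inE mem_filter sT andbT.
Qed.

Lemma mem_map_has (T U : eqType) (f : T -> U) (s : seq T) y :
  (y \in map f s) = has (fun x => y == f x) s.
Proof. by apply/mapP/hasP => [[x sx ->] | [x sx /eqP ->]]; exists x. Qed.

Lemma has_filterE (T : Type) (a p : pred T) (s : seq T) :
  has a [seq x <- s | p x] = has (fun x => p x && a x) s.
Proof. by elim: s => //= x s IH; case: (p x); rewrite /= IH. Qed.

(* Unlike [undup], which is quadratic in the length of its input, this
   deduplication is quadratic only in the length of its output. *)
Definition dedup (T : eqType) (s : seq T) : seq T :=
  foldr (fun x acc => if x \in acc then acc else x :: acc) [::] s.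

Lemma mem_dedup (T : eqType) (s : seq T) : dedup s =i s.
Proof.
elim: s => //= x s IH y; rewrite inE -IH.
by case: ifP => [xs|_]; rewrite ?inE //; case: eqP => // ->.
Qed.

Lemma dedup_uniq (T : eqType) (s : seq T) : uniq (dedup s).
Proof. by elim: s => //= x s IH; case: ifP => //= ->. Qed.

Definition tuples4 (T : Type) (s : seq T) : seq (T * T * T * T) :=
  [seq (x, d) | x <- [seq (x, c) | x <- [seq (a, b) | a <- s, b <- s], c <- s], d <- s].

Lemma mem_tuples4 (T : eqType) (s : seq T) a b c d :
  a \in s -> b \in s -> c \in s -> d \in s -> (a, b, c, d) \in tuples4 s.
Proof.
by move=> sa sb sc sd; do 3![apply: allpairs_f => //]; apply: allpairs_f.
Qed.

Definition Fs : seq F := [:: 0; 1; 2%:R].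

Lemma mem_Fs (a : F) : a \in Fs.
Proof. by case: a => [[|[|[|]]] ?]. Qed.

Definition Fs_inf : seq (option F) := None :: map Some Fs.

Lemma mem_Fs_inf (t : option F) : t \in Fs_inf.
Proof. by case: t => [[[|[|[|]]] ?]|]. Qed.

Lemma Fs_inf_uniq : uniq Fs_inf.
Proof. by []. Qed.

(* Evaluating arithmetic and equality of ['F_3] in the virtual machine is slow,
   so vectors are compared and combined through their coordinates, naturals
   below 3 with arithmetic mod 3. *)
Definition nadd (m n : nat) : nat := ((m + n) %% 3)%N.
Definition nmul (m n : nat) : nat := ((m * n) %% 3)%N.
Definition nopp (n : nat) : nat := ((3 - n) %% 3)%N.

Lemma val_addF (a b : F) : a + b = nadd a b :> nat. Proof. by []. Qed.
Lemma val_mulF (a b : F) : a * b = nmul a b :> nat. Proof. by []. Qed.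
Lemma eqF_val (a b : F) : (a == b) = (a == b :> nat). Proof. by []. Qed.
Lemma val_natrF n : (n%:R : F) = (n %% 3)%N :> nat. Proof. exact: val_Fp_nat. Qed.

Definition coord4 := (nat * nat * nat * nat)%type.
Definition coords (v : vec) : coord4 :=
  (v 0 0 : nat, v 0 1 : nat, v 0 2 : nat, v 0 3 : nat).
Definition of_coords (x : coord4) : vec :=
  let: (a, b, c, d) := x in mkv a%:R b%:R c%:R d%:R.
Definition coord_list : seq coord4 := tuples4 (iota 0 3).

Lemma coordsK : cancel coords of_coords.
Proof.
move=> v; apply/rowP => -[[|[|[|[|]]]] lt_j4] //; rewrite mxE /= natr_Zp;
  by congr (v _ _); apply: val_inj.
Qed.

Lemma coords_inj : injective coords. Proof. exact: can_inj coordsK. Qed.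

Lemma coords_in v : coords v \in coord_list.
Proof. by apply: mem_tuples4; rewrite mem_iota ltn_ord. Qed.

Lemma of_coordsK : {in coord_list, cancel of_coords coords}.
Proof.
have lt3 : all (fun x : coord4 => [&& x.1.1.1 < 3, x.1.1.2 < 3, x.1.2 < 3 & x.2 < 3]%N)
               coord_list by [].
move=> x /(allP lt3); case: x => [[[a b] c] d] /and4P [lt_a lt_b lt_c lt_d].
by rewrite /coords !mxE /= !val_natrF !modn_small.
Qed.

Lemma existsV (p : pred vec) : [exists v, p v] = has (fun x => p (of_coords x)) coord_list.
Proof.
rewrite (@existsE _ (map of_coords coord_list)) ?has_map // => v.
by rewrite -(coordsK v) map_f ?coords_in.
Qed.

Definition coord_pairs : seq (coord4 * coord4) :=
  [seq (x, y) | x <- coord_list, y <- coord_list].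

Lemma existsV2 (p : vec -> vec -> bool) :
  [exists u, exists v, p u v] =
  has (fun xy => p (of_coords xy.1) (of_coords xy.2)) coord_pairs.
Proof.
rewrite (has_allpairs_pair _ _ (fun x y => p (of_coords x) (of_coords y))) existsV.
by apply: eq_has => x; rewrite existsV.
Qed.

Definition czero : coord4 := (0, 0, 0, 0)%N.

Lemma of_coords_eq0 x : x \in coord_list -> (of_coords x == 0) = (x == czero).
Proof. by move=> x_in; rewrite -(inj_eq coords_inj) of_coordsK // /coords !mxE. Qed.

(* A set of vectors is represented by the coordinates of its elements, listed
   in the order of [coord_list]; [cset p] represents the set cut out by [p].
   [simpl] must not unfold it: that would expand the filter over the explicit
   [coord_list]. *)
Definition cset (p : pred coord4) : seq coord4 := filter p coord_list.
Arguments cset p : simpl never.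

Definition rep (S : {set vec}) : seq coord4 := cset (fun x => of_coords x \in S).
Definition unrep (c : seq coord4) : {set vec} := [set v | coords v \in c].
Definition csubset (c d : seq coord4) : bool := all (mem d) c.

Lemma mem_cset p x : (x \in cset p) = (x \in coord_list) && p x.
Proof. by rewrite mem_filter andbC. Qed.

Lemma mem_rep (S : {set vec}) v : (coords v \in rep S) = (v \in S).
Proof. by rewrite mem_cset coords_in coordsK. Qed.

Lemma mem_rep_of_coords (S : {set vec}) x :
  x \in coord_list -> (x \in rep S) = (of_coords x \in S).
Proof. by rewrite mem_cset => ->. Qed.

Lemma rep_inj : injective rep.
Proof. by move=> S T eqST; apply/setP => v; rewrite -!mem_rep eqST. Qed.

Lemma eq_rep (S T : {set vec}) : (S == T) = (rep S == rep T).
Proof. by rewrite (inj_eq rep_inj). Qed.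

Lemma subset_rep (S T : {set vec}) : (S \subset T) = csubset (rep S) (rep T).
Proof.
apply/subsetP/allP => ST => [x | v]; last by rewrite -!mem_rep => /ST.
rewrite mem_cset => /andP [x_in /ST]; rewrite -mem_rep of_coordsK //.
Qed.

Lemma rep_cset (S : {set vec}) p : (forall v, (v \in S) = p (coords v)) -> rep S = cset p.
Proof. by move=> Sp; apply: eq_in_filter => x x_in; rewrite Sp of_coordsK. Qed.

Lemma cset_memK p : cset (mem (cset p)) = cset p.
Proof. by apply: eq_in_filter => x x_in /=; rewrite mem_cset x_in. Qed.

Lemma card_rep (P : pred {set vec}) (s : seq (seq coord4)) q :
  uniq s -> {in s, forall c, cset (mem c) = c} ->
  (forall S, P S = (rep S \in s) && q (rep S)) -> #|[set S | P S]| = count q s.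
Proof.
move=> s_uniq s_cset PE; have unrepK : {in s, cancel unrep rep}.
  by move=> c /s_cset {2}<-; apply: rep_cset => v; rewrite inE.
have unrep_inj : {in [seq c <- s | q c] &, injective unrep}.
  move=> c d; rewrite !mem_filter => /andP [_ /unrepK cK] /andP [_ /unrepK dK].
  by move=> /(congr1 rep); rewrite cK dK.
rewrite -size_filter -(size_map unrep) -(card_uniqP _); last first.
  by rewrite (map_inj_in_uniq unrep_inj) filter_uniq.
apply: eq_card => S; rewrite inE PE; apply/andP/mapP => [[sS qS] | [c]].
  by exists (rep S); rewrite ?mem_filter ?qS //; apply: rep_inj; rewrite unrepK.
by rewrite mem_filter => /andP [qc sc] ->; rewrite unrepK.
Qed.

Definition cscale (a : nat) (x : coord4) : coord4 :=
  let: (x0, x1, x2, x3) := x in (nmul a x0, nmul a x1, nmul a x2, nmul a x3).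
Definition cadd (x y : coord4) : coord4 :=
  let: (x0, x1, x2, x3) := x in let: (y0, y1, y2, y3) := y in
  (nadd x0 y0, nadd x1 y1, nadd x2 y2, nadd x3 y3).
Definition cdot (x y : coord4) : nat :=
  let: (x0, x1, x2, x3) := x in let: (y0, y1, y2, y3) := y in
  nadd (nadd (nadd (nmul x0 y0) (nmul x1 y1)) (nmul x2 y2)) (nmul x3 y3).

Lemma coordsZ a v : coords (a *: v) = cscale a (coords v).
Proof. by rewrite /coords !mxE !val_mulF. Qed.

Lemma coordsD u v : coords (u + v) = cadd (coords u) (coords v).
Proof. by rewrite /coords !mxE !val_addF. Qed.

Lemma sum4 (f : 'I_4 -> F) : \sum_(i < 4) f i = f 0 + f 1 + f 2%:R + f 3%:R.
Proof.
rewrite !big_ord_recr big_ord0 /= add0r.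
by congr (_ + _ + _ + _); congr f; apply: val_inj.
Qed.

Definition cspan1 (x : coord4) : seq coord4 :=
  cset (mem [seq cscale a x | a <- iota 0 3]).
Definition cspan2 (x y : coord4) : seq coord4 :=
  cset (mem [seq cadd (cscale a x) (cscale b y) | a <- iota 0 3, b <- iota 0 3]).

Lemma coords_natrZ (n : nat) v : (n < 3)%N -> coords (n%:R *: v) = cscale n (coords v).
Proof. by move=> lt_n3; rewrite coordsZ val_natrF modn_small. Qed.

Lemma rep_span1 v : rep (span1 v) = cspan1 (coords v).
Proof.
apply: rep_cset => w; apply/imsetP/mapP => [[a _ ->] | [n]].
  by exists (nat_of_ord a); rewrite ?mem_iota ?ltn_ord ?coordsZ.
rewrite mem_iota add0n => lt_n3 wE; exists n%:R => //.
by apply: coords_inj; rewrite coords_natrZ.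
Qed.

Lemma rep_span2 u v : rep (span2 u v) = cspan2 (coords u) (coords v).
Proof.
apply: rep_cset => w; apply/imset2P/allpairsP => [[a b _ _ ->] | [[m n]]].
  by exists (nat_of_ord a, nat_of_ord b); rewrite !mem_iota !ltn_ord coordsD !coordsZ.
rewrite !mem_iota !add0n => -[/= lt_m3 lt_n3 wE]; exists m%:R n%:R => //.
by apply: coords_inj; rewrite coordsD !coords_natrZ.
Qed.

Lemma rep_plane c : rep (plane c) = cset (fun x => cdot (coords c) x == 0%N).
Proof. by apply: rep_cset => v; rewrite inE sum4 eqF_val !val_addF !val_mulF. Qed.

Definition ccol (R : seq (seq nat)) (j : nat) : coord4 :=
  let e k := nth 0%N (nth [::] R k) j in (e 0%N, e 1%N, e 2%N, e 3%N).
Definition cmulmx (x : coord4) (R : seq (seq nat)) : coord4 :=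
  (cdot x (ccol R 0), cdot x (ccol R 1), cdot x (ccol R 2), cdot x (ccol R 3)).

Lemma coords_mulmx v (M : 'M[F]_4) R :
  (forall k j : 'I_4, M k j = nth 0%N (nth [::] R k) j :> nat) ->
  coords (v *m M) = cmulmx (coords v) R.
Proof. by move=> ME; rewrite /coords !mxE !sum4 !val_addF !val_mulF !ME. Qed.

Definition vals4 (a b c d : F) : coord4 := (a : nat, b : nat, c : nat, d : nat).

Lemma coords_mkv a b c d : coords (mkv a b c d) = vals4 a b c d.
Proof. by rewrite /coords !mxE. Qed.

Definition cPt (t : option F) : coord4 :=
  if t is Some t then vals4 (t ^+ 3) (t ^+ 2) t 1 else vals4 1 0 0 0.
Definition cosc (t : option F) : coord4 :=
  if t is Some t then vals4 1 (- (3%:R * t)) (3%:R * t ^+ 2) (- t ^+ 3) else vals4 0 0 0 1.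
Definition ctdir (t : option F) : coord4 :=
  if t is Some t then vals4 (3%:R * t ^+ 2) (2%:R * t) 1 0 else vals4 0 1 0 0.
Definition cReP (a b : F) : coord4 :=
  let al := (a, b) in let a2 := cmul al al in let a3 := cmul a2 al in vals4 a3.1 a2.1 a 1.
Definition cImP (a b : F) : coord4 :=
  let al := (a, b) in let a2 := cmul al al in let a3 := cmul a2 al in vals4 a3.2 a2.2 b 0.

Lemma coords_Pt t : coords (Pt t) = cPt t.
Proof. by case: t => *; apply: coords_mkv. Qed.
Lemma coords_osc t : coords (osc t) = cosc t.
Proof. by case: t => *; apply: coords_mkv. Qed.
Lemma coords_tdir t : coords (tdir t) = ctdir t.
Proof. by case: t => *; apply: coords_mkv. Qed.
Lemma coords_ReP a b : coords (ReP a b) = cReP a b.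
Proof. exact: coords_mkv. Qed.
Lemma coords_ImP a b : coords (ImP a b) = cImP a b.
Proof. exact: coords_mkv. Qed.

(* The rows of [Mabcd a b c d]: a matrix is built by the locked [\matrix_]
   constructor, so its entries cannot be evaluated. *)
Definition Gstar_rows (a b c d : F) : seq (seq F) := [::
    [:: a ^+ 3; a ^+ 2 * c; a * c ^+ 2; c ^+ 3];
    [:: 3%:R * a ^+ 2 * b; a ^+ 2 * d + 2%:R * a * b * c;
        b * c ^+ 2 + 2%:R * a * c * d; 3%:R * c ^+ 2 * d];
    [:: 3%:R * a * b ^+ 2; b ^+ 2 * c + 2%:R * a * b * d;
        a * d ^+ 2 + 2%:R * b * c * d; 3%:R * c * d ^+ 2];
    [:: b ^+ 3; b ^+ 2 * d; b * d ^+ 2; d ^+ 3]].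

Definition Gstar_nat_rows (a b c d : F) : seq (seq nat) :=
  map (map val) (Gstar_rows a b c d).

Lemma Mabcd_entry a b c d (k j : 'I_4) :
  Mabcd a b c d k j = nth 0%N (nth [::] (Gstar_nat_rows a b c d) k) j :> nat.
Proof.
have size_row : size (nth [::] (Gstar_rows a b c d) k) = 4%N.
  by case: k => [[|[|[|[|]]]] ?].
by rewrite mxE (nth_map [::]) ?(nth_map 0) ?size_row ?ltn_ord.
Qed.

Definition cimage (R : seq (seq nat)) (c : seq coord4) : seq coord4 :=
  cset (mem [seq cmulmx x R | x <- c]).

Lemma rep_Gstar_image a b c d (L : {set vec}) :
  rep (Gstar_image (Mabcd a b c d) L) = cimage (Gstar_nat_rows a b c d) (rep L).
Proof.
have coordsM v :
    coords (v *m Mabcd a b c d) = cmulmx (coords v) (Gstar_nat_rows a b c d).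
  exact/coords_mulmx/Mabcd_entry.
apply: rep_cset => v; apply/imsetP/mapP => [[w wL ->] | [x]].
  by exists (coords w); rewrite ?mem_rep ?coordsM.
rewrite mem_cset => /andP [x_in xL] vE; exists (of_coords x) => //.
by apply: coords_inj; rewrite coordsM of_coordsK.
Qed.

Definition cGstar : seq (seq (seq nat)) :=
  [seq Gstar_nat_rows k.1.1.1 k.1.1.2 k.1.2 k.2
  | k <- tuples4 Fs & k.1.1.1 * k.2 - k.1.1.2 * k.1.2 != 0].

Definition corbit (c : seq coord4) : seq (seq coord4) := [seq cimage R c | R <- cGstar].

Definition corbit_size (c : seq coord4) : nat := size (undup (corbit c)).

Lemma in_Gstar_orbit_rep L0 L : in_Gstar_orbit L0 L = (rep L \in corbit (rep L0)).
Proof.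
rewrite mem_map_has has_map has_filterE.
apply/existsP/hasP => [[a] | [[[[a b] c] d] _ /= /andP [det_nz /eqP LE]]].
  move=> /existsP [b /existsP [c /existsP [d /andP [det_nz /eqP ->]]]].
  exists (a, b, c, d); first exact: mem_tuples4 (mem_Fs _) (mem_Fs _) (mem_Fs _) (mem_Fs _).
  by rewrite /= det_nz rep_Gstar_image /=.
exists a; apply/existsP; exists b; apply/existsP; exists c; apply/existsP; exists d.
by rewrite det_nz eq_rep rep_Gstar_image LE eqxx.
Qed.

Lemma card_Gstar_orbit L0 : #|Gstar_orbit L0| = corbit_size (rep L0).
Proof.
rewrite /corbit_size -count_predT; apply: card_rep; first exact: undup_uniq.
  by move=> c; rewrite mem_undup => /mapP [R _ ->]; apply: cset_memK.
by move=> L; rewrite andbT mem_undup in_Gstar_orbit_rep.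
Qed.

Definition cAline : seq coord4 := cset (fun x => (x.1.1.1 == 0) && (x.2 == 0))%N.
Definition cUnG1 : seq coord4 :=
  cset (fun x => (x.1.1.2 == nopp x.1.2) && (x.1.1.2 == nopp x.2)).
Definition cUnG2 : seq coord4 := cset (fun x => (x.1.2 == 0%N) && (x.1.1.2 == nopp x.2)).
Definition cEA2 : seq coord4 :=
  cset (fun x => (x.1.1.1 == 0%N) && (x.1.1.2 == nopp x.2)).
Definition cEA3 : seq coord4 := cset (fun x => (x.1.1.1 == x.1.2) && (x.2 == 0%N)).
Definition cEnG3 : seq coord4 :=
  cset (fun x => (x.1.1.1 == x.1.2) && (x.1.1.2 == nopp x.2)).

(* Named so that the virtual machine computes each of them only once. *)
Definition cUnG1_orbit := corbit cUnG1.
Definition cUnG2_orbit := corbit cUnG2.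
Definition cEA2_orbit := corbit cEA2.
Definition cEA3_orbit := corbit cEA3.
Definition cEnG3_orbit := corbit cEnG3.

Lemma rep_Aline : rep Aline = cAline. Proof. by apply: rep_cset => v; rewrite inE. Qed.
Lemma rep_UnG1 : rep UnG1_rep = cUnG1. Proof. by apply: rep_cset => v; rewrite inE. Qed.
Lemma rep_UnG2 : rep UnG2_rep = cUnG2. Proof. by apply: rep_cset => v; rewrite inE. Qed.
Lemma rep_EA2 : rep EA2_rep = cEA2. Proof. by apply: rep_cset => v; rewrite inE. Qed.
Lemma rep_EA3 : rep EA3_rep = cEA3. Proof. by apply: rep_cset => v; rewrite inE. Qed.
Lemma rep_EnG3 : rep EnG3_rep = cEnG3. Proof. by apply: rep_cset => v; rewrite inE. Qed.

Definition ccurve_points : seq (seq coord4) := [seq cspan1 (cPt t) | t <- Fs_inf].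
Definition ctangents : seq (seq coord4) := [seq cspan2 (cPt t) (ctdir t) | t <- Fs_inf].
Definition creal_chords : seq (seq coord4) :=
  [seq cspan2 (cPt st.1) (cPt st.2)
  | st <- [seq (s, t) | s <- Fs_inf, t <- Fs_inf] & st.1 != st.2].
Definition cimaginary_chords : seq (seq coord4) :=
  [seq cspan2 (cReP ab.1 ab.2) (cImP ab.1 ab.2)
  | ab <- [seq (a, b) | a <- Fs, b <- Fs] & ab.2 != 0].
Definition cGamma_planes : seq (seq coord4) :=
  [seq cset (fun x => cdot (cosc t) x == 0%N) | t <- Fs_inf].

Lemma rep_tangent t : rep (tangent t) = cspan2 (cPt t) (ctdir t).
Proof. by rewrite rep_span2 coords_Pt coords_tdir. Qed.

Definition cCpoint (c : seq coord4) := c \in ccurve_points.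
Definition cGamma4point (c : seq coord4) := csubset c cAline.
Definition con_tangent (c : seq coord4) := has (csubset c) ctangents.
Definition con_real_chord (c : seq coord4) := has (csubset c) creal_chords.

Lemma Cpoint_rep P : Cpoint P = cCpoint (rep P).
Proof.
rewrite /Cpoint /cCpoint (existsE _ mem_Fs_inf) mem_map_has.
by apply: eq_has => t; rewrite eq_rep rep_span1 coords_Pt.
Qed.

Lemma Gamma4point_rep P : Gamma4point P = cGamma4point (rep P).
Proof. by rewrite /Gamma4point subset_rep rep_Aline. Qed.

Lemma on_tangent_rep P : on_tangent P = con_tangent (rep P).
Proof.
rewrite /on_tangent /con_tangent (existsE _ mem_Fs_inf) has_map.
by apply: eq_has => t; rewrite /= subset_rep rep_tangent.
Qed.

Lemma on_real_chord_rep P : on_real_chord P = con_real_chord (rep P).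
Proof.
rewrite /on_real_chord /con_real_chord (exists2E _ mem_Fs_inf) has_map has_filterE.
by apply: eq_has => -[s t]; rewrite /= subset_rep rep_span2 !coords_Pt.
Qed.

Definition cTOpoint (c : seq coord4) := [&& ~~ cCpoint c, ~~ cGamma4point c & con_tangent c].
Definition cRCpoint (c : seq coord4) :=
  [&& ~~ cCpoint c, ~~ cGamma4point c, ~~ con_tangent c & con_real_chord c].
Definition cICpoint (c : seq coord4) :=
  [&& ~~ cCpoint c, ~~ cGamma4point c, ~~ cTOpoint c & ~~ cRCpoint c].

Definition cMclass (j : nat) (c : seq coord4) : bool :=
  match j with
  | 1 => cCpoint c
  | 2 => cGamma4point c || cICpoint c
  | 3 => cTOpoint c
  | 4 => cRCpoint c
  | _ => false
  end%N.

Lemma Mclass_rep j P : Mclass j P = cMclass j (rep P).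
Proof.
case: j => [|[|[|[|[|j]]]]] //=;
  rewrite /ICpoint /TOpoint /RCpoint /cICpoint /cTOpoint /cRCpoint
    ?Cpoint_rep ?Gamma4point_rep ?on_tangent_rep ?on_real_chord_rep //.
Qed.

Definition cRC_line (c : seq coord4) := c \in creal_chords.
Definition cTr_line (c : seq coord4) := c \in ctangents.
Definition cncurve (c : seq coord4) : nat := count (csubset^~ c) ccurve_points.
Definition cin_Gamma_plane (c : seq coord4) := has (csubset c) cGamma_planes.
Definition cmeets_A (c : seq coord4) :=
  has (fun x => [&& x != czero, x \in c & x \in cAline]) coord_list.
Definition cIC_line (c : seq coord4) := c \in cimaginary_chords.

Lemma RC_line_rep L : RC_line L = cRC_line (rep L).
Proof.
rewrite /RC_line /cRC_line (exists2E _ mem_Fs_inf) mem_map_has has_filterE.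
by apply: eq_has => -[s t]; rewrite /= eq_rep rep_span2 !coords_Pt.
Qed.

Lemma Tr_line_rep L : Tr_line L = cTr_line (rep L).
Proof.
rewrite /Tr_line /cTr_line (existsE _ mem_Fs_inf) mem_map_has.
by apply: eq_has => t; rewrite eq_rep rep_tangent.
Qed.

Lemma ncurve_rep L : ncurve L = cncurve (rep L).
Proof.
rewrite /ncurve /cncurve (card_set_count _ Fs_inf_uniq mem_Fs_inf) count_map.
by apply: eq_count => t; rewrite /= subset_rep rep_span1 coords_Pt.
Qed.

Lemma in_Gamma_plane_rep L : in_Gamma_plane L = cin_Gamma_plane (rep L).
Proof.
rewrite /in_Gamma_plane /cin_Gamma_plane (existsE _ mem_Fs_inf) has_map.
by apply: eq_has => t; rewrite /= subset_rep rep_plane coords_osc.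
Qed.

Lemma meets_A_rep L : meets_A L = cmeets_A (rep L).
Proof.
rewrite /meets_A /cmeets_A existsV; apply: eq_in_has => x x_in /=.
rewrite (mem_rep_of_coords L x_in) -rep_Aline (mem_rep_of_coords Aline x_in).
by rewrite of_coords_eq0.
Qed.

Lemma IC_line_rep L : IC_line L = cIC_line (rep L).
Proof.
rewrite /IC_line /cIC_line (exists2E _ mem_Fs) mem_map_has has_filterE.
by apply: eq_has => -[a b]; rewrite /= eq_rep rep_span2 coords_ReP coords_ImP.
Qed.

Definition cUGamma (c : seq coord4) :=
  [&& cncurve c == 1%N, ~~ cTr_line c & cin_Gamma_plane c].
Definition cEA_line (c : seq coord4) := [&& cncurve c == 0%N, c != cAline & cmeets_A c].
Definition cEnGamma (c : seq coord4) := [&& cncurve c == 0%N, ~~ cmeets_A c & ~~ cIC_line c].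
Definition cEA1 (c : seq coord4) :=
  [&& cEA_line c, ~~ (c \in cEA2_orbit) & ~~ (c \in cEA3_orbit)].
Definition cEnGamma_rest (c : seq coord4) := cEnGamma c && ~~ (c \in cEnG3_orbit).

Definition cLclass (i : nat) (c : seq coord4) : bool :=
  match i with
  | 1 => cRC_line c
  | 2 => cEnGamma_rest c && (corbit_size c == 12)
  | 3 => cTr_line c || (c \in cUnG2_orbit)
  | 4 => [|| cIC_line c, c == cAline | (c \in cEA2_orbit)]
  | 5 => cUGamma c || (c \in cUnG1_orbit)
  | 6 => cEA1 c || cEnGamma_rest c && (corbit_size c == 24)
  | 7 => (c \in cEA3_orbit) || (c \in cEnG3_orbit)
  | _ => false
  end%N.

Lemma Lclass_rep i L : Lclass i L = cLclass i (rep L).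
Proof.
case: i => [|[|[|[|[|[|[|[|i]]]]]]]] //=;
  rewrite /EnGamma2 /EnGamma1 /EnGamma_rest /EnGamma /EA1 /EA_line /UGamma
    /UnGamma1 /UnGamma2 /EA2 /EA3 /EnGamma3
    /cEnGamma_rest /cEnGamma /cEA1 /cEA_line /cUGamma
    /cUnG1_orbit /cUnG2_orbit /cEA2_orbit /cEA3_orbit /cEnG3_orbit
    ?RC_line_rep ?Tr_line_rep ?ncurve_rep ?in_Gamma_plane_rep ?meets_A_rep ?IC_line_rep
    ?in_Gstar_orbit_rep ?card_Gstar_orbit ?eq_rep
    ?rep_Aline ?rep_UnG1 ?rep_UnG2 ?rep_EA2 ?rep_EA3 ?rep_EnG3 //.
Qed.

Definition cpoints : seq (seq coord4) :=
  undup [seq cspan1 x | x <- coord_list & x != czero].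
Definition clines : seq (seq coord4) :=
  dedup [seq cspan2 xy.1 xy.2
        | xy <- coord_pairs & (xy.1 != czero) && (xy.2 \notin cspan1 xy.1)].

Lemma is_point_rep P : is_point P = (rep P \in cpoints).
Proof.
rewrite /is_point existsV mem_undup mem_map_has has_filterE.
by apply: eq_in_has => x x_in /=; rewrite of_coords_eq0 // eq_rep rep_span1 of_coordsK.
Qed.

Lemma is_line_rep L : is_line L = (rep L \in clines).
Proof.
rewrite /is_line existsV2 mem_dedup mem_map_has has_filterE.
apply: eq_in_has => -[x y] /allpairsP [[x' y'] [/= x_in y_in [-> ->]]] /=.
rewrite of_coords_eq0 // -(mem_rep_of_coords _ y_in) rep_span1 eq_rep rep_span2.
by rewrite !of_coordsK // andbA.
Qed.

Definition cpoints_of (j : nat) : seq (seq coord4) := [seq c <- cpoints | cMclass j c].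
Definition clines_of (i : nat) : seq (seq coord4) := [seq c <- clines | cLclass i c].

Lemma cpoints_of_uniq j : uniq (cpoints_of j).
Proof. exact/filter_uniq/undup_uniq. Qed.

Lemma clines_of_uniq i : uniq (clines_of i).
Proof. exact/filter_uniq/dedup_uniq. Qed.

Lemma cpoints_of_cset j : {in cpoints_of j, forall c, cset (mem c) = c}.
Proof.
by move=> c; rewrite mem_filter mem_undup => /andP [_ /mapP [x _ ->]]; apply: cset_memK.
Qed.

Lemma clines_of_cset i : {in clines_of i, forall c, cset (mem c) = c}.
Proof.
by move=> c; rewrite mem_filter mem_dedup => /andP [_ /mapP [x _ ->]]; apply: cset_memK.
Qed.

Lemma point_class_rep j (P : {set vec}) :
  is_point P && Mclass j P = (rep P \in cpoints_of j).
Proof. by rewrite mem_filter [RHS]andbC is_point_rep Mclass_rep. Qed.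

Lemma line_class_rep i (L : {set vec}) :
  is_line L && Lclass i L = (rep L \in clines_of i).
Proof. by rewrite mem_filter [RHS]andbC is_line_rep Lclass_rep. Qed.

Lemma card_points_on_line j (L : {set vec}) :
  #|[set P | [&& is_point P, Mclass j P & P \subset L]]| =
  count (csubset^~ (rep L)) (cpoints_of j).
Proof.
apply: card_rep => [|c|P]; first exact: cpoints_of_uniq.
  exact: cpoints_of_cset.
by rewrite -point_class_rep -subset_rep; apply: andbA.
Qed.

Lemma card_lines_through_point i (P : {set vec}) :
  #|[set L | [&& is_line L, Lclass i L & P \subset L]]| =
  count (csubset (rep P)) (clines_of i).
Proof.
apply: card_rep => [|c|L]; first exact: clines_of_uniq.
  exact: clines_of_cset.
by rewrite -line_class_rep -subset_rep; apply: andbA.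
Qed.

Definition incidence_table_ok : bool :=
  all (fun i => let Ls := clines_of i in all (fun j => let Ps := cpoints_of j in
         all (fun L => count (csubset^~ L) Ps == (tb i j).1) Ls
      && all (fun P => count (csubset P) Ls == (tb i j).2) Ps) (iota 1 4)) (iota 1 7).

Lemma incidence_table_holds : incidence_table_ok.
Proof. by vm_compute. Qed.

Lemma incidence_table i j : (1 <= i <= 7)%N -> (1 <= j <= 4)%N ->
  {in clines_of i, forall L, count (csubset^~ L) (cpoints_of j) = (tb i j).1} /\
  {in cpoints_of j, forall P, count (csubset P) (clines_of i) = (tb i j).2}.
Proof.
move=> i_range j_range; have /allP /(_ i) := incidence_table_holds.
rewrite mem_iota addnC => /(_ i_range) /allP /(_ j).
rewrite mem_iota addnC => /(_ j_range) /andP [/allP on_line /allP through_point].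
by split=> [L /on_line | P /through_point] /eqP.
Qed.

Theorem mainTheorem12 :
  forall i j : nat, (1 <= i <= 7)%N -> (1 <= j <= 4)%N ->
    (forall L : {set vec}, is_line L -> Lclass i L ->
       #|[set P : {set vec} | [&& is_point P, Mclass j P & P \subset L]]| = (tb i j).1)
    /\
    (forall P : {set vec}, is_point P -> Mclass j P ->
       #|[set L : {set vec} | [&& is_line L, Lclass i L & P \subset L]]| = (tb i j).2).
Proof.
move=> i j i_range j_range.
have [on_line through_point] := incidence_table i_range j_range.
split=> [L L_line L_class | P P_point P_class].
  rewrite card_points_on_line; apply: on_line.
  by rewrite -line_class_rep L_line L_class.
rewrite card_lines_through_point; apply: through_point.
by rewrite -point_class_rep P_point P_class.
Qed.
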